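(* Assume Assumption A. Let $\mathscr C$ be a communicating (equivalence) class of the limiting chain $X_R$. Then for all $\eta\ne\xi\in\mathscr C$ there exists $m(\eta,\xi)\in(0,\infty)$ with $\lim_{N\to\infty}\mu_N(\eta)/\mu_N(\xi)=m(\eta,\xi)$.
   Context: Setting: $E$ is a fixed finite set; for each $N\ge1$, $(\eta^N_t)$ is a continuous-time irreducible Markov chain on $E$ with jump rates $R_N(\eta,\xi)$ and unique invariant probability measure $\mu_N$. Ordered families: a finite family of sequences of positive reals $(a^r_N)_{N\ge1}$, $r\in\mathfrak R$, is ordered if for all $r\neq s$ the sequence $\arctan(a^r_N/a^s_N)$ converges as $N\to\infty$. Assumption A: (i) for each $\eta\neq\xi$, either $R_N(\eta,\xi)=0$ for all $N$ or $R_N(\eta,\xi)>0$ for all $N$; let $\mathbb B=\{(\eta,\xi):\eta\ne\xi,R_N(\eta,\xi)>0\}$. (ii) For every $m\ge1$ the family $\prod_{(\eta,\xi)\in\mathbb B}R_N(\eta,\xi)^{k(\eta,\xi)}$, indexed by $k:\mathbb B\to\mathbb Z_+$ with $\sum k=m$, is ordered. Limiting chain: $\alpha_N^{-1}=\sum_\eta\sum_{\xi\ne\eta}R_N(\eta,\xi)$; under Assumption A, $R(\eta,\xi)=\lim_N\alpha_NR_N(\eta,\xi)\in[0,1]$ exists; $X_R$ is the Markov chain on $E$ with rates $R(\eta,\xi)$ (possibly reducible). Two states are in the same communicating class if each can be reached from the other along a path of positive $R$-rates. *)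

From mathcomp Require Import all_boot.
From Stdlib Require Import Reals Relations.
Set Implicit Arguments.
Unset Strict Implicit.
Unset Printing Implicit Defensive.
Open Scope R_scope.

(* A rate matrix on E: only off-diagonal entries are meaningful. *)
Definition rates (E : finType) := E -> E -> R.

Definition pos_jump (E : finType) (Q : rates E) : relation E :=
  fun x y => x <> y /\ 0 < Q x y.

Definition reaches (E : finType) (Q : rates E) (x y : E) : Prop :=
  clos_refl_trans E (pos_jump Q) x y.

Definition irreducible (E : finType) (Q : rates E) : Prop :=
  forall x y : E, reaches Q x y.

Definition communicate (E : finType) (Q : rates E) (x y : E) : Prop :=
  reaches Q x y /\ reaches Q y x.

Definition invariant_prob (E : finType) (Q : rates E) (mu : E -> R) : Prop :=
  (forall x, 0 <= mu x) /\
  \big[Rplus/0]_(x : E) mu x = 1 /\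
  (forall y : E,
     \big[Rplus/0]_(x : E | x != y) (mu x * Q x y)
     = mu y * \big[Rplus/0]_(z : E | z != y) Q y z).

Definition ordered (I : Type) (a : I -> nat -> R) : Prop :=
  (forall r N, 0 < a r N) /\
  forall r s : I, r <> s -> exists l, Un_cv (fun N => atan (a r N / a s N)) l.

Definition inB (E : finType) (RN : nat -> rates E) (p : E * E) : Prop :=
  p.1 <> p.2 /\ forall N, 0 < RN N p.1 p.2.

(* exponent vectors k : B -> Z_+ with |k| = m (k is extended by 0 off B) *)
Definition exponent (E : finType) (RN : nat -> rates E) (m : nat) : Type :=
  { k : E * E -> nat |
      (forall p, ~ inB RN p -> k p = 0%nat) /\
      (\sum_(p : E * E | p.1 != p.2) k p)%N = m }.

Definition monomial (E : finType) (RN : nat -> rates E) (m : nat)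
  (k : exponent RN m) (N : nat) : R :=
  \big[Rmult/1]_(p : E * E | p.1 != p.2) (RN N p.1 p.2 ^ (proj1_sig k p)).

Definition assumptionA (E : finType) (RN : nat -> rates E) : Prop :=
  (forall x y : E, x <> y ->
     (forall N, RN N x y = 0) \/ (forall N, 0 < RN N x y)) /\
  (forall m : nat, (1 <= m)%nat -> ordered (@monomial E RN m)).

(* alpha_N^{-1} = total off-diagonal rate *)
Definition total_rate (E : finType) (Q : rates E) : R :=
  \big[Rplus/0]_(p : E * E | p.1 != p.2) Q p.1 p.2.

Definition limiting_rates (E : finType) (RN : nat -> rates E) (Rlim : rates E) : Prop :=
  forall x y : E, x <> y ->
    Un_cv (fun N => RN N x y / total_rate (RN N)) (Rlim x y).

(* By the Markov chain tree theorem, [mu_N x] is proportional to the total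
   weight of the spanning arborescences rooted at [x], a tree weighing the
   product of its rates.  Trees using a vanishing rate weigh nothing, so
   [mu_N eta / mu_N xi] is a ratio of two sums of monomials of degree [#|E| - 1]
   in the rates, and Assumption A makes any two such monomials comparable: their
   ratio tends to a limit in [[0, +oo]].  Dividing by a dominant monomial, both
   sums converge, to limits that are not both zero.  On the other hand a
   positive limiting rate [R x y] forces [mu_N x / mu_N y <= 2 / R x y] for
   large [N]; following paths of the limiting chain in both directions, the
   ratio eventually stays in a compact subset of [(0, +oo)], so both limits are
   positive. *)

From HB Require Import structures.
From Stdlib Require Import Reals Relations Lra ClassicalEpsilon.
From mathcomp Require Import all_boot.
Set Implicit Arguments.
Unset Strict Implicit.
Unset Printing Implicit Defensive.
Open Scope R_scope.

Lemma RplusA : associative Rplus. Proof. by move=> x y z; rewrite Rplus_assoc. Qed.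
Lemma RmultA : associative Rmult. Proof. by move=> x y z; rewrite Rmult_assoc. Qed.
HB.instance Definition _ := Monoid.isComLaw.Build R 0 Rplus RplusA Rplus_comm Rplus_0_l.
HB.instance Definition _ := Monoid.isComLaw.Build R 1 Rmult RmultA Rmult_comm Rmult_1_l.
HB.instance Definition _ := Monoid.isMulLaw.Build R 0 Rmult Rmult_0_l Rmult_0_r.
HB.instance Definition _ :=
  Monoid.isAddLaw.Build R Rmult Rplus Rmult_plus_distr_r Rmult_plus_distr_l.

Lemma big_Rplus_ge0 (I : Type) (r : seq I) (P : pred I) (F : I -> R) :
  (forall i, P i -> 0 <= F i) -> 0 <= \big[Rplus/0]_(i <- r | P i) F i.
Proof. by move=> F_ge0; apply: big_ind => // [|x y]; lra. Qed.

Lemma big_Rmult_ge0 (I : Type) (r : seq I) (P : pred I) (F : I -> R) :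
  (forall i, P i -> 0 <= F i) -> 0 <= \big[Rmult/1]_(i <- r | P i) F i.
Proof. by move=> F_ge0; apply: big_ind => //; [lra | exact: Rmult_le_pos]. Qed.

Lemma big_Rmult_gt0 (I : Type) (r : seq I) (P : pred I) (F : I -> R) :
  (forall i, P i -> 0 < F i) -> 0 < \big[Rmult/1]_(i <- r | P i) F i.
Proof. by move=> F_gt0; apply: big_ind => //; [lra | exact: Rmult_lt_0_compat]. Qed.

Lemma big_Rplus_ge_term (I : finType) (P : pred I) (F : I -> R) j :
  (forall i, P i -> 0 <= F i) -> P j -> F j <= \big[Rplus/0]_(i | P i) F i.
Proof.
move=> F_ge0 Pj; rewrite (bigD1 j) //=.
have : 0 <= \big[Rplus/0]_(i | P i && (i != j)) F i.
  by apply: big_Rplus_ge0 => i /andP[/F_ge0].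
lra.
Qed.

Definition convergent (u : nat -> R) := exists l, Un_cv u l.

Lemma Un_cv_const (a : R) : Un_cv (fun _ => a) a.
Proof. by move=> e e_gt0; exists 0%nat => n _; rewrite /R_dist Rminus_diag Rabs_R0. Qed.

Lemma Rle_cv_lim_eventually (u v : nat -> R) a b N0 :
  (forall n, (N0 <= n)%N -> u n <= v n) -> Un_cv u a -> Un_cv v b -> a <= b.
Proof.
move=> uv u_a v_b.
apply: (Rle_cv_lim (Un := fun n => u (n + N0)%nat) (Vn := fun n => v (n + N0)%nat)).
- by move=> n; apply: uv; rewrite leq_addl.
- exact: CV_shift'.
- exact: CV_shift'.
Qed.

Lemma Un_cv_big_Rplus (I : Type) (r : seq I) (P : pred I) (F : I -> nat -> R) (l : I -> R) :
  (forall i, P i -> Un_cv (F i) (l i)) ->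
  Un_cv (fun N => \big[Rplus/0]_(i <- r | P i) F i N) (\big[Rplus/0]_(i <- r | P i) l i).
Proof.
move=> F_l; elim: r => [|x r IH].
  by rewrite big_nil; apply: (Un_cv_ext (fun _ => 0)) (Un_cv_const 0) => n; rewrite big_nil.
rewrite big_cons; case Px: (P x).
  apply: (Un_cv_ext (fun N => F x N + \big[Rplus/0]_(i <- r | P i) F i N)).
    by move=> n; rewrite big_cons Px.
  exact: CV_plus (F_l x Px) IH.
by apply: (Un_cv_ext _ _ _ _ IH) => n; rewrite big_cons Px.
Qed.

Lemma Un_cv_inv (u : nat -> R) l : l <> 0 -> Un_cv u l -> Un_cv (fun n => / u n) (/ l).
Proof.
move=> l_neq0; apply: (continuity_seq Rinv).
by apply: continuity_pt_inv => //; apply: derivable_continuous_pt; apply: derivable_pt_id.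
Qed.

Lemma Un_cv_tan_atan (x : nat -> R) l : - PI / 2 < l < PI / 2 ->
  Un_cv (fun N => atan (x N)) l -> Un_cv x (tan l).
Proof.
move=> l_bd atan_l; apply: (Un_cv_ext _ _ (fun n => tan_atan (x n))).
apply: continuity_seq atan_l.
by apply: derivable_continuous_pt; apply: derivable_pt_tan.
Qed.

(* [atan] is a homeomorphism of [(0, +oo]] onto [(0, PI/2]]: a limit [PI/2] of
   [atan (x N)] means [/ x N -> 0]. *)
Lemma convergent_or_inv_of_cv_atan (x : nat -> R) l : (forall N, 0 < x N) ->
  Un_cv (fun N => atan (x N)) l -> convergent x \/ convergent (fun N => / x N).
Proof.
move=> x_gt0 atan_l; have PI_gt0 := PI_RGT_0.
have l_ge0 : 0 <= l.
  apply: (Rle_cv_lim (Un := fun _ => 0)) (Un_cv_const 0) atan_l => n.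
  by rewrite -atan_0; apply: Rlt_le; apply: atan_increasing.
have l_le : l <= PI / 2.
  apply: (Rle_cv_lim (Vn := fun _ => PI / 2)) atan_l (Un_cv_const _) => n.
  by have := atan_bound (x n); lra.
have [l_lt | l_eq] : l < PI / 2 \/ l = PI / 2 by lra.
  by left; exists (tan l); apply: Un_cv_tan_atan => //; lra.
right; exists (tan 0); apply: Un_cv_tan_atan; first lra.
apply: (Un_cv_ext (fun N => PI / 2 - atan (x N))) => [n|]; first by rewrite atan_inv.
have -> : 0 = PI / 2 - l by lra.
exact: CV_minus (Un_cv_const _) atan_l.
Qed.

Lemma seq_has_max (T : eqType) (le : T -> T -> Prop) (s : seq T) :
  (forall x y, x \in s -> y \in s -> le x y \/ le y x) ->
  (forall x y z, x \in s -> y \in s -> z \in s -> le x y -> le y z -> le x z) ->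
  (forall x, x \in s -> le x x) ->
  s <> [::] -> exists2 m, m \in s & forall x, x \in s -> le x m.
Proof.
elim: s => [|a s IH] // le_total le_trans le_refl _.
have ain : a \in a :: s by rewrite inE eqxx.
case: s IH le_total le_trans le_refl ain => [|b s] IH le_total le_trans le_refl ain.
  by exists a => // x; rewrite inE => /eqP ->; apply: le_refl.
have sub x : x \in b :: s -> x \in a :: b :: s by move=> xs; rewrite in_cons xs orbT.
have [m ms m_max] : exists2 m, m \in b :: s & forall x, x \in b :: s -> le x m.
  apply: IH => //.
  - by move=> x y /sub + /sub; apply: le_total.
  - by move=> x y z /sub + /sub + /sub; apply: le_trans.
  - by move=> x /sub; apply: le_refl.
case: (le_total a m ain (sub _ ms)) => [am | ma].
- by exists m; [exact: sub | move=> x; rewrite in_cons => /orP[/eqP -> | /m_max]].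
- exists a => // x; rewrite in_cons => /orP[/eqP -> | xs]; first exact: le_refl.
  exact: le_trans (sub _ xs) (sub _ ms) ain (m_max _ xs) ma.
Qed.

Lemma Un_cv_ratio_gt0 (u v : nat -> R) P Q c C N0 :
  Un_cv u P -> Un_cv v Q -> 0 <= Q -> 0 < P + Q -> 0 < c ->
  (forall N, (N0 <= N)%N -> 0 < v N /\ c <= u N / v N <= C) ->
  0 < P / Q /\ Un_cv (fun N => u N / v N) (P / Q).
Proof.
move=> u_P v_Q Q_ge0 PQ_gt0 c_gt0 bd.
have cv_scaled a : Un_cv (fun N => a * v N) (a * Q) by apply: CV_mult => //; apply: Un_cv_const.
have cQ_le_P : c * Q <= P.
  apply: (Rle_cv_lim_eventually (N0 := N0) _ (cv_scaled c) u_P) => N /bd [v_gt0 bdN].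
  have -> : u N = u N / v N * v N by field; lra.
  by apply: Rmult_le_compat_r; lra.
have P_le_CQ : P <= C * Q.
  apply: (Rle_cv_lim_eventually (N0 := N0) _ u_P (cv_scaled C)) => N /bd [v_gt0 bdN].
  have -> : u N = u N / v N * v N by field; lra.
  by apply: Rmult_le_compat_r; lra.
have Q_gt0 : 0 < Q.
  case: (Rle_lt_dec Q 0) => // Q_le0; have Q0 : Q = 0 by lra.
  by rewrite Q0 Rmult_0_r in P_le_CQ; lra.
split; first by apply: Rdiv_lt_0_compat => //; nra.
exact: CV_mult u_P (Un_cv_inv (Rgt_not_eq _ _ Q_gt0) v_Q).
Qed.

Definition comparable_on (I : Type) (g : I -> nat -> R) (U : I -> Prop) :=
  forall i j, U i -> U j ->
    convergent (fun N => g i N / g j N) \/ convergent (fun N => g j N / g i N).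

Lemma exists_dominant (I : finType) (g : I -> nat -> R) (U : pred I) i0 :
  (forall i, U i -> forall N, 0 < g i N) -> comparable_on g U -> U i0 ->
  exists2 m, U m & forall i, U i -> convergent (fun N => g i N / g m N).
Proof.
move=> g_gt0 g_cmp Ui0.
have g_neq0 i N : U i -> g i N <> 0 by move=> Ui; apply: Rgt_not_eq; apply: g_gt0.
have [m] : exists2 m, m \in enum U &
    forall i, i \in enum U -> convergent (fun N => g i N / g m N).
  apply: seq_has_max.
  - by move=> i j; rewrite !mem_enum; apply: g_cmp.
  - move=> i j k; rewrite !mem_enum => Ui Uj Uk [l1 cv1] [l2 cv2]; exists (l1 * l2).
    apply: (Un_cv_ext _ _ _ _ (CV_mult _ _ _ _ cv1 cv2)) => n.
    by field; split; apply: g_neq0.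
  - move=> i; rewrite mem_enum => Ui; exists 1.
    by apply: (Un_cv_ext _ _ _ _ (Un_cv_const 1)) => n; rewrite /Rdiv Rinv_r //; exact: g_neq0.
  - by move=> U0; move: (mem_enum U i0); rewrite U0 in_nil unfold_in Ui0.
by rewrite mem_enum => Um m_max; exists m => // i Ui; apply: m_max; rewrite mem_enum.
Qed.

Lemma dominant_normalization (I : finType) (g : I -> nat -> R) (U : pred I) i0 :
  (forall i, U i -> forall N, 0 < g i N) -> comparable_on g U -> U i0 ->
  exists m (l : I -> R), [/\ U m, l m = 1 &
    forall i, U i -> 0 <= l i /\ Un_cv (fun N => g i N / g m N) (l i)].
Proof.
move=> g_gt0 g_cmp Ui0; have [m Um m_dom] := exists_dominant g_gt0 g_cmp Ui0.
have [l l_lim] : exists l : I -> R, forall i, U i -> Un_cv (fun N => g i N / g m N) (l i).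
  apply: (choice (fun i li => U i -> Un_cv (fun N => g i N / g m N) li)) => i.
  by case Ui: (U i); [have [li] := m_dom i Ui; exists li | exists 0].
exists m, l; split => //.
- apply: (UL_sequence _ _ _ (l_lim m Um)).
  apply: (Un_cv_ext _ _ _ _ (Un_cv_const 1)) => N.
  by rewrite /Rdiv Rinv_r //; apply: Rgt_not_eq; apply: g_gt0.
- move=> i Ui; split; last exact: l_lim.
  apply: (Rle_cv_lim (Un := fun _ => 0)) (Un_cv_const 0) (l_lim i Ui) => N.
  by apply: Rlt_le; apply: Rdiv_lt_0_compat; apply: g_gt0.
Qed.

(* Dividing both sums by the dominant term makes them converge, to limits that
   are not both zero; the bounds on the ratio then force both to be positive. *)
Lemma ratio_of_sums_cv (I : finType) (g : I -> nat -> R) (A B : pred I) c C N0 :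
  let S (P : pred I) N := \big[Rplus/0]_(i | P i) g i N in
  (forall i, A i || B i -> forall N, 0 < g i N) ->
  comparable_on g (fun i => A i || B i) ->
  (exists i, B i) -> 0 < c ->
  (forall N, (N0 <= N)%N -> c <= S A N / S B N <= C) ->
  exists m, 0 < m /\ Un_cv (fun N => S A N / S B N) m.
Proof.
move=> S g_gt0 g_cmp [i0 Bi0] c_gt0 bd.
have A_AB i : A i -> A i || B i by move=> ->.
have B_AB i : B i -> A i || B i by move=> ->; rewrite orbT.
have [m [l [ABm lm1 l_lim]]] := dominant_normalization g_gt0 g_cmp (B_AB _ Bi0).
have gm_gt0 N : 0 < g m N by apply: g_gt0.
have S_cv (P : pred I) : (forall i, P i -> A i || B i) ->
    Un_cv (fun N => S P N / g m N) (\big[Rplus/0]_(i | P i) l i).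
  move=> PAB; apply: (Un_cv_ext (fun N => \big[Rplus/0]_(i | P i) (g i N / g m N))).
    by move=> N; rewrite /S /Rdiv big_distrl.
  by apply: Un_cv_big_Rplus => i /PAB /l_lim [].
have l_sum_ge (P : pred I) : (forall i, P i -> A i || B i) ->
    0 <= \big[Rplus/0]_(i | P i) l i /\ (P m -> 1 <= \big[Rplus/0]_(i | P i) l i).
  move=> PAB; split => [|Pm]; first by apply: big_Rplus_ge0 => i /PAB /l_lim [].
  by rewrite -lm1; apply: big_Rplus_ge_term => // i /PAB /l_lim [].
have [[lA_ge0 lA_ge1] [lB_ge0 lB_ge1]] := (l_sum_ge A A_AB, l_sum_ge B B_AB).
have lAB_gt0 : 0 < \big[Rplus/0]_(i | A i) l i + \big[Rplus/0]_(i | B i) l i.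
  by case/orP: ABm => [/lA_ge1 | /lB_ge1]; lra.
have SB_gt0 N : 0 < S B N.
  apply: (Rlt_le_trans _ (g i0 N)); first exact: g_gt0 (B_AB _ Bi0) N.
  by apply: big_Rplus_ge_term => // i /B_AB ABi; apply: Rlt_le; apply: g_gt0.
have bd_scaled N : (N0 <= N)%N ->
    0 < S B N / g m N /\ c <= S A N / g m N / (S B N / g m N) <= C.
  have [SB_pos gm_pos] := (SB_gt0 N, gm_gt0 N).
  move=> /bd bdN; split; first exact: Rdiv_lt_0_compat.
  by have -> : S A N / g m N / (S B N / g m N) = S A N / S B N by field; lra.
have [lim_gt0 lim_cv] :=
  Un_cv_ratio_gt0 (S_cv A A_AB) (S_cv B B_AB) lB_ge0 lAB_gt0 c_gt0 bd_scaled.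
move: lim_gt0 lim_cv; set lim := (_ / _) => lim_gt0 lim_cv.
exists lim; split => //; apply: (Un_cv_ext _ _ _ _ lim_cv) => N.
by have [SB_pos gm_pos] := (SB_gt0 N, gm_gt0 N); field; lra.
Qed.

Section Arborescences.

Variable E : finType.
Implicit Types (f g : {ffun E -> E}) (r x y v : E).

Definition fupd g x y : {ffun E -> E} := [ffun v => if v == x then y else g v].

(* A map [f] with unique fixed point [r] all of whose orbits reach [r]: the
   edges [v -> f v], [v != r], form a spanning tree directed towards [r]. *)
Definition arborescence r f : bool :=
  [&& f r == r, [forall v, (v != r) ==> (f v != v)] & [forall v, fconnect f v r]].

Definition cut_tree g x : bool := arborescence x (fupd g x x).

Lemma fupd_eq g x y : fupd g x y x = y.
Proof. by rewrite ffunE eqxx. Qed.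

Lemma fupd_ne g x y v : v != x -> fupd g x y v = g v.
Proof. by rewrite ffunE => /negbTE ->. Qed.

Lemma fupd_fupd g x y z : fupd (fupd g x y) x z = fupd g x z.
Proof. by apply/ffunP => v; rewrite !ffunE; case: (v == x). Qed.

Lemma arborescence_neq r f v : arborescence r f -> v != r -> f v != v.
Proof. by case/and3P=> _ /forallP /(_ v) + _ vr; rewrite vr. Qed.

Lemma arborescence_root r f : arborescence r f -> f r = r.
Proof. by case/and3P=> /eqP. Qed.

Lemma fconnect_iterP (f : E -> E) x y : fconnect f x y <-> exists n, iter n f x = y.
Proof.
split; first by move=> xy; exists (findex f x y); apply: iter_findex.
by case=> n <-; apply: fconnect_iter.
Qed.

Lemma iter_reach_trans (f : E -> E) x y z :
  (exists n, iter n f x = y) -> (exists n, iter n f y = z) -> exists n, iter n f x = z.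
Proof. by case=> n1 <- [n2 <-]; exists (n2 + n1)%N; rewrite iterD. Qed.

Lemma iter_reach_eq_off (f1 f2 : E -> E) r :
  (forall w, w != r -> f1 w = f2 w) ->
  forall n v, iter n f1 v = r -> exists m, iter m f2 v = r.
Proof.
move=> f12; elim=> [|n IH] v; first by move=> <-; exists 0%N.
rewrite iterSr; case: (eqVneq v r) => [-> _|vr]; first by exists 0%N.
by rewrite f12 // => /IH [m fm]; exists m.+1; rewrite iterSr.
Qed.

Lemma cut_treeP g x :
  cut_tree g x <-> (forall v, v != x -> g v != v) /\ (forall v, exists n, iter n g v = x).
Proof.
have eq_off w : w != x -> fupd g x x w = g w by apply: fupd_ne.
split.
  case/and3P=> _ /forallP nfix /forallP reach; split.
    by move=> v vx; move: (nfix v); rewrite vx fupd_ne.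
  move=> v; case/fconnect_iterP: (reach v) => n.
  by apply: iter_reach_eq_off => w /eq_off.
case=> nfix reach; apply/and3P; split.
- by rewrite fupd_eq.
- by apply/forallP => v; apply/implyP => vx; rewrite fupd_ne //; apply: nfix.
- apply/forallP => v; apply/fconnect_iterP; case: (reach v) => n.
  by apply: iter_reach_eq_off => w /eq_off.
Qed.

(* If cutting the out-edge of [y] leaves a tree, then [y] lies on the unique
   cycle of [g], and cutting the edge into [y] along that cycle also does. *)
Lemma cut_tree_pred g y :
  g y != y -> cut_tree g y -> exists x, [&& x != y, g x == y & cut_tree g x].
Proof.
move=> gy /cut_treeP [nfix reach]; case: (reach (g y)) => n gyn.
exists (iter n g y).
have gx : g (iter n g y) = y by rewrite -iterS iterSr.
have xy : iter n g y != y by apply: contraNneq gy => xy; rewrite -{1}xy gx.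
rewrite xy gx eqxx /=; apply/cut_treeP; split.
  by move=> v vx; case: (eqVneq v y) => [->|]; last exact: nfix.
by move=> v; apply: (iter_reach_trans (reach v)); exists n.
Qed.

Lemma cut_tree_succ g x y :
  x != y -> g x = y -> cut_tree g x -> g y != y /\ cut_tree g y.
Proof.
move=> xy gx /cut_treeP [nfix reach].
have gy : g y != y by apply: nfix; rewrite eq_sym.
split => //; apply/cut_treeP; split.
  by move=> v vy; case: (eqVneq v x) => [->|vx]; [rewrite gx eq_sym | exact: nfix].
by move=> v; apply: (iter_reach_trans (reach v)); exists 1%N.
Qed.

Lemma cut_tree_pred_uniq g y x1 x2 :
  g x1 = y -> cut_tree g x1 -> g x2 = y -> cut_tree g x2 -> x1 = x2.
Proof.
have from_y x : cut_tree g x -> exists n, iter n g y == x.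
  by move=> /cut_treeP [_ reach]; case: (reach y) => n yn; exists n; apply/eqP.
(* the first visits of the orbit of [y] to [x1] and to [x2] coincide *)
have first_visit a b (ta : cut_tree g a) (tb : cut_tree g b) : g a = y ->
    (ex_minn (from_y a ta) <= ex_minn (from_y b tb))%N -> a = b.
  move=> ga; case: ex_minnP => i /eqP ya imin; case: ex_minnP => j /eqP yb jmin.
  rewrite leq_eqVlt => /orP[/eqP ij | ij]; first by rewrite -ya -yb ij.
  have : iter (j - i.+1) g y == b by rewrite -yb -{2}(subnK ij) iterD iterS ya ga.
  have j_gt0 : (0 < j)%N by exact: leq_ltn_trans (leq0n i) ij.
  by move/jmin; rewrite leqNgt ltn_subrL j_gt0.
move=> g1 t1 g2 t2.
case: (leqP (ex_minn (from_y _ t1)) (ex_minn (from_y _ t2))) => h.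
  exact: first_visit g1 h.
by apply/esym; apply: first_visit g2 (ltnW h).
Qed.

Variable Q : rates E.

Definition tree_weight r f : R := \big[Rmult/1]_(v | v != r) Q v (f v).
Definition arbor_weight r : R := \big[Rplus/0]_(f | arborescence r f) tree_weight r f.
Definition fun_weight g : R := \big[Rmult/1]_v Q v (g v).

(* The bijection grafts the edge [r -> z] onto the root of the arborescence. *)
Lemma arbor_weight_edge r z :
  \big[Rplus/0]_(f | arborescence r f) (tree_weight r f * Q r z) =
  \big[Rplus/0]_(g | cut_tree g r && (g r == z)) fun_weight g.
Proof.
symmetry; rewrite (reindex_onto (fun f => fupd f r z) (fun g => fupd g r r)); last first.
  move=> g /andP[_ /eqP gr]; apply/ffunP => v; rewrite !ffunE.
  by case: (eqVneq v r) => [->|].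
apply: eq_big => [f | f _].
  rewrite /cut_tree !fupd_fupd fupd_eq eqxx andbT.
  apply/idP/idP => [/andP[t /eqP <-] // | t].
  have -> : fupd f r r = f.
    by apply/ffunP => v; rewrite ffunE; case: (eqVneq v r) => [->|]; rewrite ?(arborescence_root t).
  by rewrite t eqxx.
rewrite /fun_weight (bigD1 r) //= fupd_eq Rmult_comm /tree_weight.
by congr (_ * _); apply: eq_bigr => v vr; rewrite fupd_ne.
Qed.

(* Both sides are the total weight of the maps [g] with [g y != y] that become
   arborescences rooted at [y] when cutting [y -> g y]: on the right such a [g]
   is counted once, through the predecessor of [y] on the cycle of [g]. *)
Lemma arbor_weight_balance y :
  arbor_weight y * \big[Rplus/0]_(z | z != y) Q y z =
  \big[Rplus/0]_(x | x != y) (arbor_weight x * Q x y).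
Proof.
pose unicyclic_at g := (g y != y) && cut_tree g y.
have -> : arbor_weight y * \big[Rplus/0]_(z | z != y) Q y z =
          \big[Rplus/0]_(g | unicyclic_at g) fun_weight g.
  rewrite big_distrr /= (partition_big (fun g : {ffun E -> E} => g y) (fun z => z != y));
    last by move=> g /andP[].
  apply: eq_bigr => z zy; rewrite /arbor_weight big_distrl /= arbor_weight_edge.
  apply: eq_bigl => g; rewrite /unicyclic_at.
  by case: (eqVneq (g y) z) => [->|]; rewrite ?zy ?andbF.
rewrite (eq_bigr (fun x => \big[Rplus/0]_(g | cut_tree g x && (g x == y)) fun_weight g));
  last by move=> x _; rewrite /arbor_weight big_distrl /= arbor_weight_edge.
rewrite (eq_bigr (fun x => \big[Rplus/0]_g
  (if cut_tree g x && (g x == y) then fun_weight g else 0)));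
  last by move=> x _; rewrite big_mkcond.
rewrite exchange_big /= [LHS]big_mkcond /=; apply: eq_bigr => g _; rewrite -big_mkcondr /=.
case: (boolP (unicyclic_at g)) => [/andP[gy ty] | not_uni].
  have [x0 /and3P [x0y /eqP gx0 tx0]] := cut_tree_pred gy ty.
  rewrite (big_pred1 x0) // => x /=; apply/idP/idP => [/and3P[xy tx /eqP gx] | /eqP ->].
    by apply/eqP; apply: cut_tree_pred_uniq gx tx gx0 tx0.
  by rewrite x0y tx0 gx0 eqxx.
rewrite big_pred0 // => x /=; apply/negP => /and3P [xy tx /eqP gx].
by case: (cut_tree_succ xy gx tx) => gy ty; rewrite /unicyclic_at gy ty in not_uni.
Qed.

End Arborescences.

Section SpanningArborescence.

Variable E : finType.

Fixpoint reaches_within (e : rel E) (r : E) (n : nat) (x : E) : bool :=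
  if n is k.+1 then reaches_within e r k x || [exists y, e x y && reaches_within e r k y]
  else x == r.

(* Point every vertex to a neighbour one step closer to [r]. *)
Lemma arborescence_of_reach (e : rel E) r : irreflexive e ->
  (forall x, exists n, reaches_within e r n x) ->
  exists f, arborescence r f /\ forall v, v != r -> e v (f v).
Proof.
move=> e_irr reach; pose d x := ex_minn (reach x).
have descent x : x != r -> exists y, e x y && (d y < d x)%N.
  move=> xr; rewrite /d; case: ex_minnP => [[|k]] /= reach_x dmin.
    by rewrite reach_x in xr.
  case/orP: reach_x => [/dmin | /existsP [y /andP[exy reach_y]]]; first by rewrite ltnn.
  by exists y; rewrite exy /=; case: ex_minnP => m _ /(_ k reach_y).
pose f := [ffun x => if x == r then r else odflt r [pick y | e x y && (d y < d x)%N]].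
have f_desc x : x != r -> e x (f x) && (d (f x) < d x)%N.
  move=> xr; rewrite ffunE (negbTE xr).
  by case: pickP => [y //|none]; case: (descent x xr) => y; rewrite none.
have f_reach n x : (d x <= n)%N -> exists m, iter m f x = r.
  elim: n x => [|n IH] x dx; case: (eqVneq x r) => [->|xr]; try by exists 0%N.
    by case/andP: (f_desc x xr) => _; rewrite leqn0 in dx; rewrite (eqP dx).
  case/andP: (f_desc x xr) => _ dfx.
  have [m fm] := IH (f x) (leq_trans dfx dx); by exists m.+1; rewrite iterSr.
exists f; split => [|v vr]; last by case/andP: (f_desc v vr).
apply/and3P; split.
- by rewrite ffunE eqxx.
- apply/forallP => v; apply/implyP => vr; case/andP: (f_desc v vr) => efv _.
  by apply: contraTneq efv => ->; rewrite e_irr.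
- by apply/forallP => v; apply/fconnect_iterP; apply: (f_reach (d v)).
Qed.

Definition pos_edge (Q : rates E) : rel E := fun x y => (x != y) && Rlt_dec 0 (Q x y).

Lemma pos_edgeP (Q : rates E) x y : reflect (pos_jump Q x y) (pos_edge Q x y).
Proof.
rewrite /pos_edge /pos_jump; case: Rlt_dec => Q_gt0; rewrite ?andbT ?andbF.
- by apply: (iffP idP) => [/eqP | [/eqP]].
- by constructor => -[].
Qed.

Lemma arborescence_exists (Q : rates E) r : irreducible Q ->
  exists f, arborescence r f /\ forall v, v != r -> 0 < Q v (f v).
Proof.
move=> irr.
have irr_e : irreflexive (pos_edge Q) by move=> x; rewrite /pos_edge eqxx.
have reach x : exists n, reaches_within (pos_edge Q) r n x.
  elim: (clos_rt_rt1n _ _ _ _ (irr x r)) => [y|a b c /pos_edgeP ab _ [n reach_b]].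
    by exists 0%N; rewrite /= eqxx.
  by exists n.+1; apply/orP; right; apply/existsP; exists b; rewrite ab.
have [f [tf pos_f]] := arborescence_of_reach irr_e reach.
by exists f; split => // v /pos_f /pos_edgeP [].
Qed.

End SpanningArborescence.

Section Balance.

Variables (E : finType) (Q : rates E).

Definition offdiag_nonneg : Prop := forall x y : E, x <> y -> 0 <= Q x y.

Definition balanced (v : E -> R) : Prop :=
  forall y, \big[Rplus/0]_(x | x != y) (v x * Q x y) = v y * \big[Rplus/0]_(z | z != y) Q y z.

Hypothesis Q_ge0 : offdiag_nonneg.

Lemma balanced_zero_reaches (v : E -> R) : (forall x, 0 <= v x) -> balanced v ->
  forall x y, reaches Q x y -> v y = 0 -> v x = 0.
Proof.
move=> v_ge0 bal x y; elim=> {x y} [x y [xy Qxy] vy | x // | x y z _ IHxy _ IHyz vz].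
- have in_flow0 : \big[Rplus/0]_(x | x != y) (v x * Q x y) = 0 by rewrite bal vy Rmult_0_l.
  have : v x * Q x y <= 0.
    rewrite -in_flow0.
    apply: (big_Rplus_ge_term (F := fun x => v x * Q x y)); last exact/eqP.
    by move=> i /eqP iy; apply: Rmult_le_pos => //; apply: Q_ge0.
  by have := v_ge0 x; nra.
- exact: IHxy (IHyz vz).
Qed.

Lemma invariant_prob_gt0 (mu : E -> R) : irreducible Q -> invariant_prob Q mu ->
  forall x, 0 < mu x.
Proof.
move=> irr [mu_ge0 [mu_sum1 bal]] x.
case: (Rle_lt_dec (mu x) 0) => // mux_le0.
have mu0 z : mu z = 0.
  by apply: (balanced_zero_reaches mu_ge0 bal (irr z x)); have := mu_ge0 x; lra.
by move: mu_sum1; rewrite big1 // => ?; lra.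
Qed.

(* Uniqueness of the invariant measure: subtracting the largest multiple of [mu]
   lying below [w] leaves a nonnegative balanced vector vanishing somewhere. *)
Lemma balanced_proportional (mu w : E -> R) : irreducible Q ->
  (forall x, 0 < mu x) -> balanced mu -> (forall x, 0 <= w x) -> balanced w ->
  exists t, forall x, w x = t * mu x.
Proof.
move=> irr mu_gt0 bal_mu w_ge0 bal_w.
have [E0 | E_ne] := eqVneq (enum E) [::].
  by exists 0 => x; move: (mem_enum E x); rewrite E0.
have [x0 _ x0_min] : exists2 x0, x0 \in enum E &
    forall x, x \in enum E -> w x0 / mu x0 <= w x / mu x.
  apply: (@seq_has_max _ (fun a b => w b / mu b <= w a / mu a)) => //.
  - by move=> a b _ _; case: (Rle_lt_dec (w a / mu a) (w b / mu b)) => h; [right | left]; lra.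
  - by move=> a b c _ _ _; lra.
  - by move=> a _; lra.
  - exact/eqP.
pose t := w x0 / mu x0; pose v x := w x - t * mu x.
have v_ge0 x : 0 <= v x.
  have := x0_min x (mem_enum _ _); have := mu_gt0 x; rewrite /v /t => mux wx.
  have -> : w x = w x / mu x * mu x by field; lra.
  by have := Rmult_le_compat_r (mu x) _ _ (Rlt_le _ _ mux) wx; lra.
have bal_v : balanced v.
  move=> y; rewrite /v.
  rewrite (eq_bigr (fun x => w x * Q x y + (- t) * (mu x * Q x y))); last by move=> x _; ring.
  by rewrite big_split /= -big_distrr /= bal_w bal_mu; ring.
have v0 : v x0 = 0 by rewrite /v /t; have := mu_gt0 x0; move=> ?; field; lra.
exists t => x; have := balanced_zero_reaches v_ge0 bal_v (irr x x0) v0; rewrite /v; lra.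
Qed.

Lemma tree_weight_ge0 r f : arborescence r f -> 0 <= tree_weight Q r f.
Proof.
move=> tf; apply: big_Rmult_ge0 => v vr; apply: Q_ge0.
by apply/eqP; rewrite eq_sym; exact: arborescence_neq tf vr.
Qed.

Lemma arbor_weight_ge0 r : 0 <= arbor_weight Q r.
Proof. by apply: big_Rplus_ge0 => f; apply: tree_weight_ge0. Qed.

(* Markov chain tree theorem, in the form of ratios. *)
Lemma invariant_ratio_arbor_weight (mu : E -> R) x y : irreducible Q -> invariant_prob Q mu ->
  0 < arbor_weight Q y -> mu x / mu y = arbor_weight Q x / arbor_weight Q y.
Proof.
move=> irr inv Wy_gt0; have mu_gt0 := invariant_prob_gt0 irr inv.
have [t W_mu] := balanced_proportional irr mu_gt0 inv.2.2 arbor_weight_ge0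
  (fun y => esym (arbor_weight_balance Q y)).
move: Wy_gt0; rewrite !W_mu => tmu_gt0.
have t_neq0 : t <> 0 by move=> t0; rewrite t0 Rmult_0_l in tmu_gt0; lra.
by have := mu_gt0 x; have := mu_gt0 y; move=> ? ?; field; lra.
Qed.

Lemma exit_rate_le_total_rate y : \big[Rplus/0]_(z | z != y) Q y z <= total_rate Q.
Proof.
rewrite /total_rate -(pair_big_dep predT (fun a b => a != b) (fun a b => Q a b)) /=.
rewrite (eq_bigl (fun z => y != z)); last by move=> z; rewrite eq_sym.
apply: (big_Rplus_ge_term (F := fun a => \big[Rplus/0]_(b | a != b) Q a b)) => // a _.
by apply: big_Rplus_ge0 => b /eqP; apply: Q_ge0.
Qed.

Lemma flux_le_total_rate (mu : E -> R) x y : (forall z, 0 <= mu z) -> balanced mu ->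
  x <> y -> mu x * Q x y <= mu y * total_rate Q.
Proof.
move=> mu_ge0 bal xy; apply: (Rle_trans _ (mu y * \big[Rplus/0]_(z | z != y) Q y z)).
  rewrite -bal; apply: (big_Rplus_ge_term (F := fun x => mu x * Q x y)); last exact/eqP.
  by move=> i /eqP iy; apply: Rmult_le_pos => //; apply: Q_ge0.
by apply: Rmult_le_compat_l => //; apply: exit_rate_le_total_rate.
Qed.

End Balance.

Section RatioBounds.

Variables (E : finType) (RN : nat -> rates E) (mu : nat -> E -> R) (Rl : rates E).
Hypothesis RN_ge0 : forall N, offdiag_nonneg (RN N).
Hypothesis mu_gt0 : forall N x, 0 < mu N x.
Hypothesis mu_bal : forall N, balanced (RN N) (mu N).
Hypothesis RN_lim : limiting_rates RN Rl.

Definition ratio_bounded (x y : E) : Prop :=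
  exists K N0, 0 < K /\ forall N, (N0 <= N)%N -> mu N x / mu N y <= K.

(* Eventually [RN N x y >= Rl x y / 2 * total_rate (RN N)], while the flow
   [mu N x * RN N x y] is at most [mu N y * total_rate (RN N)]. *)
Lemma ratio_bounded_jump x y : pos_jump Rl x y -> ratio_bounded x y.
Proof.
move=> [xy Rxy_gt0]; have half_gt0 : Rl x y / 2 > 0 by lra.
have [N0 N0_lim] := RN_lim xy half_gt0.
exists (2 / Rl x y), N0; split => [|N /leP /N0_lim]; first by apply: Rdiv_lt_0_compat; lra.
rewrite /R_dist; set a := RN N x y; set T := total_rate (RN N) => /Rabs_def2 [_ a_T].
have T_ge0 : 0 <= T by apply: big_Rplus_ge0 => p /eqP; apply: RN_ge0.
have T_gt0 : 0 < T.
  case: (Rle_lt_dec T 0) => // T_le0; have T0 : T = 0 by lra.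
  by move: a_T; rewrite T0 /Rdiv Rinv_0 Rmult_0_r; lra.
have a_gt0 : 0 < a.
  have -> : a = a / T * T by field; lra.
  by apply: Rmult_lt_0_compat => //; lra.
have flux := flux_le_total_rate (RN_ge0 N) (fun z => Rlt_le _ _ (mu_gt0 N z)) (mu_bal N) xy.
have mux := mu_gt0 N x; have muy := mu_gt0 N y.
have ratio_le : mu N x / mu N y <= T / a.
  apply: (Rmult_le_reg_r (mu N y * a)); first exact: Rmult_lt_0_compat.
  have -> : mu N x / mu N y * (mu N y * a) = mu N x * a by field; lra.
  by have -> : T / a * (mu N y * a) = mu N y * T by field; lra.
apply: (Rle_trans _ _ _ ratio_le).
apply: (Rmult_le_reg_r (a / T * Rl x y)); first by apply: Rmult_lt_0_compat; lra.
have -> : T / a * (a / T * Rl x y) = Rl x y by field; lra.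
have -> : 2 / Rl x y * (a / T * Rl x y) = 2 * (a / T) by field; lra.
lra.
Qed.

Lemma ratio_bounded_reaches x y : reaches Rl x y -> ratio_bounded x y.
Proof.
elim=> {x y} [x y /ratio_bounded_jump // | x |
  x y z _ [K1 [N1 [K1_gt0 bd1]]] _ [K2 [N2 [K2_gt0 bd2]]]].
  exists 1, 0%N; split => [|N _]; first lra.
  by rewrite /Rdiv Rinv_r; [lra | apply: Rgt_not_eq].
exists (K1 * K2), (maxn N1 N2); split => [|N]; first exact: Rmult_lt_0_compat.
rewrite geq_max => /andP[/bd1 le1 /bd2 le2].
have mux := mu_gt0 N x; have muy := mu_gt0 N y; have muz := mu_gt0 N z.
have -> : mu N x / mu N z = (mu N x / mu N y) * (mu N y / mu N z) by field; lra.
by apply: Rmult_le_compat => //; apply: Rlt_le; apply: Rdiv_lt_0_compat.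
Qed.

Lemma ratio_bounds_communicate x y : communicate Rl x y ->
  exists c C N0, 0 < c /\ forall N, (N0 <= N)%N -> c <= mu N x / mu N y <= C.
Proof.
case=> /ratio_bounded_reaches [K1 [N1 [K1_gt0 bd1]]] /ratio_bounded_reaches [K2 [N2 [K2_gt0 bd2]]].
exists (/ K2), K1, (maxn N1 N2); split => [|N]; first exact: Rinv_0_lt_compat.
rewrite geq_max => /andP[/bd1 le1 /bd2 le2]; split => //.
have mux := mu_gt0 N x; have muy := mu_gt0 N y.
have -> : mu N x / mu N y = / (mu N y / mu N x) by field; lra.
by apply: Rinv_le_contravar => //; apply: Rdiv_lt_0_compat.
Qed.

End RatioBounds.

Section TreeMonomials.

Variables (E : finType) (RN : nat -> rates E).
Implicit Types (r v : E) (f : {ffun E -> E}).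

(* By Assumption A(i), positivity of a rate at [N = 0] is positivity for all [N]. *)
Definition positive_tree r f : bool := [forall v, (v != r) ==> Rlt_dec 0 (RN 0 v (f v))].

Definition positive_arbor r (i : E * {ffun E -> E}) : bool :=
  [&& i.1 == r, arborescence i.1 i.2 & positive_tree i.1 i.2].

Hypothesis RN_dichotomy :
  forall x y : E, x <> y -> (forall N, RN N x y = 0) \/ (forall N, 0 < RN N x y).

Lemma tree_edge_neq r f v : arborescence r f -> v != r -> v <> f v.
Proof. by move=> tf vr; apply/eqP; rewrite eq_sym; exact: arborescence_neq tf vr. Qed.

Lemma positive_tree_gt0 r f : arborescence r f -> positive_tree r f ->
  forall N v, v != r -> 0 < RN N v (f v).
Proof.
move=> tf /forallP pos N v vr.
have RN0_gt0 : 0 < RN 0 v (f v) by move: (pos v); rewrite vr /=; case: Rlt_dec.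
case: (RN_dichotomy (tree_edge_neq tf vr)) => [RN_eq0 | //].
by rewrite RN_eq0 in RN0_gt0; lra.
Qed.

Lemma tree_weight_not_positive r f : arborescence r f -> ~~ positive_tree r f ->
  forall N, tree_weight (RN N) r f = 0.
Proof.
move=> tf; rewrite negb_forall => /existsP [v]; rewrite negb_imply => /andP[vr not_pos] N.
case: (RN_dichotomy (tree_edge_neq tf vr)) => RN_vfv.
  by rewrite /tree_weight (bigD1 v) //= RN_vfv Rmult_0_l.
by move: not_pos; case: Rlt_dec => // /(_ (RN_vfv 0%N)).
Qed.

Lemma arbor_weight_positive_trees N r :
  arbor_weight (RN N) r = \big[Rplus/0]_(i | positive_arbor r i) tree_weight (RN N) i.1 i.2.
Proof.
rewrite -(pair_big_dep (fun a => a == r) (fun a f => arborescence a f && positive_tree a f)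
  (fun a f => tree_weight (RN N) a f)) big_pred1_eq /=.
rewrite /arbor_weight (bigID (positive_tree r)) /= [X in _ + X]big1 ?Rplus_0_r //.
by move=> f /andP[tf not_pos]; apply: tree_weight_not_positive.
Qed.

Lemma positive_tree_weight_gt0 N r f : arborescence r f -> positive_tree r f ->
  0 < tree_weight (RN N) r f.
Proof. by move=> tf pf; apply: big_Rmult_gt0 => v; apply: positive_tree_gt0. Qed.

Lemma exists_positive_arbor r : irreducible (RN 0) -> exists i, positive_arbor r i.
Proof.
move=> irr; have [f [tf f_pos]] := arborescence_exists r irr.
exists (r, f); rewrite /positive_arbor /= eqxx tf.
by apply/forallP => v; apply/implyP => /f_pos; case: Rlt_dec.
Qed.

Lemma arbor_weight_gt0 N r : irreducible (RN 0) -> 0 < arbor_weight (RN N) r.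
Proof.
move=> /(exists_positive_arbor r) [i ri]; rewrite arbor_weight_positive_trees.
have /and3P [_ ti pi] := ri.
apply: (Rlt_le_trans _ _ _ (positive_tree_weight_gt0 N ti pi)).
apply: (big_Rplus_ge_term (F := fun i => tree_weight (RN N) i.1 i.2)) => // j /and3P [_ tj pj].
exact/Rlt_le/positive_tree_weight_gt0.
Qed.

Lemma big_tree_edges (T : Type) (idx : T) (op : Monoid.com_law idx) r f (F : E -> E -> T) :
  arborescence r f ->
  \big[op/idx]_(p : E * E | p.1 != p.2) (if (p.1 != r) && (f p.1 == p.2) then F p.1 p.2 else idx) =
  \big[op/idx]_(v | v != r) F v (f v).
Proof.
move=> tf; rewrite -big_mkcondr /=.
rewrite (eq_bigl (fun p : E * E => (p.1 != r) && (f p.1 == p.2))); last first.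
  move=> [a b] /=; apply/idP/idP => [/andP[] // | /andP[ar /eqP fab]].
  by rewrite ar -fab eqxx !andbT eq_sym; exact: arborescence_neq tf ar.
rewrite -(pair_big_dep (fun a => a != r) (fun a b => f a == b) F) /=.
by apply: eq_bigr => a _; rewrite (eq_bigl (pred1 (f a))) ?big_pred1_eq // => b; rewrite eq_sym.
Qed.

Lemma tree_weight_monomial r f : arborescence r f -> positive_tree r f ->
  exists k : exponent RN (#|E|).-1, forall N, monomial k N = tree_weight (RN N) r f.
Proof.
move=> tf pf; pose k (p : E * E) : nat := (p.1 != r) && (f p.1 == p.2).
have k_supp p : ~ inB RN p -> k p = 0%N.
  case: p => a b /= not_inB; rewrite /k /=; case: (boolP (a != r)) => //= ar.
  case: (eqVneq (f a) b) => [fab|] //; rewrite -fab in not_inB.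
  case: not_inB; split; first exact: tree_edge_neq tf ar.
  by move=> N; exact: positive_tree_gt0 tf pf N a ar.
have k_deg : (\sum_(p : E * E | p.1 != p.2) k p)%N = (#|E|).-1.
  rewrite (eq_bigr (fun p => if (p.1 != r) && (f p.1 == p.2) then 1%N else 0%N)); last first.
    by move=> p _; rewrite /k; case: (_ && _).
  by rewrite (big_tree_edges _ (fun _ _ => 1%N) tf) sum1_card cardC1.
exists (exist _ k (conj k_supp k_deg)) => N; rewrite /monomial /=.
rewrite (eq_bigr (fun p => if (p.1 != r) && (f p.1 == p.2) then RN N p.1 p.2 else 1)); last first.
  by move=> p _; rewrite /k; case: (_ && _); rewrite /= ?Rmult_1_r.
by rewrite (big_tree_edges _ (RN N) tf).
Qed.

Lemma positive_tree_weights_comparable : (1 < #|E|)%N ->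
  (forall m, (1 <= m)%N -> ordered (@monomial E RN m)) ->
  comparable_on (fun i N => tree_weight (RN N) i.1 i.2)
                (fun i => arborescence i.1 i.2 && positive_tree i.1 i.2).
Proof.
move=> E_gt1 ord i j /andP[ti pi] /andP[tj pj].
have [ki ki_eq] := tree_weight_monomial ti pi.
have [kj kj_eq] := tree_weight_monomial tj pj.
have [kij | kij] := classic (ki = kj).
  left; exists 1; apply: (Un_cv_ext _ _ _ _ (Un_cv_const 1)) => N.
  rewrite -ki_eq -kj_eq kij /Rdiv Rinv_r //; apply: Rgt_not_eq.
  by rewrite kj_eq; apply: positive_tree_weight_gt0.
have deg_ge1 : (1 <= (#|E|).-1)%N by rewrite ltn_predRL.
have [l atan_l] := (ord _ deg_ge1).2 ki kj kij.
pose ratio N := tree_weight (RN N) i.1 i.2 / tree_weight (RN N) j.1 j.2.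
have ratio_gt0 N : 0 < ratio N by apply: Rdiv_lt_0_compat; apply: positive_tree_weight_gt0.
have atan_ratio : Un_cv (fun N => atan (ratio N)) l.
  by apply: (Un_cv_ext _ _ _ _ atan_l) => N; rewrite ki_eq kj_eq.
case: (convergent_or_inv_of_cv_atan ratio_gt0 atan_ratio) => [| [l' inv_l']]; first by left.
right; exists l'; apply: (Un_cv_ext _ _ _ _ inv_l') => N.
by rewrite /ratio /Rdiv Rinv_mult Rinv_inv Rmult_comm.
Qed.

End TreeMonomials.

Theorem mainTheorem13 (E : finType) (RN : nat -> rates E) (mu : nat -> E -> R)
  (Rlim : rates E) :
  (forall N, irreducible (RN N)) ->
  (forall N, invariant_prob (RN N) (mu N)) ->
  assumptionA RN ->
  limiting_rates RN Rlim ->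
  forall eta xi : E, eta <> xi -> communicate Rlim eta xi ->
  exists m : R, 0 < m /\ Un_cv (fun N => mu N eta / mu N xi) m.
Proof.
move=> irr inv [RN_dich RN_ord] RN_lim eta xi eta_xi comm.
have RN_ge0 N : offdiag_nonneg (RN N).
  by move=> x y xy; case: (RN_dich x y xy) => RN_xy; [rewrite RN_xy; lra | exact: Rlt_le].
have mu_gt0 N := invariant_prob_gt0 (RN_ge0 N) (irr N) (inv N).
have [c [C [N0 [c_gt0 mu_bd]]]] :=
  ratio_bounds_communicate RN_ge0 mu_gt0 (fun N => (inv N).2.2) RN_lim comm.
pose g (i : E * {ffun E -> E}) N := tree_weight (RN N) i.1 i.2.
pose W r N := \big[Rplus/0]_(i | positive_arbor RN r i) g i N.
have mu_ratio N : mu N eta / mu N xi = W eta N / W xi N.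
  rewrite /W -!arbor_weight_positive_trees //.
  have W_gt0 := arbor_weight_gt0 RN_dich N xi (irr 0%N).
  exact: (invariant_ratio_arbor_weight (RN_ge0 N) eta (irr N) (inv N) W_gt0).
have W_bd N : (N0 <= N)%N -> c <= W eta N / W xi N <= C by rewrite -mu_ratio; apply: mu_bd.
have g_gt0 i : positive_arbor RN eta i || positive_arbor RN xi i -> forall N, 0 < g i N.
  by case/orP => /and3P [_ ti pi] N; apply: positive_tree_weight_gt0.
have E_gt1 : (1 < #|E|)%N.
  rewrite -ltn_predRL -(cardC1 eta); apply/card_gt0P; exists xi.
  by rewrite !inE; apply/eqP => /esym.
have g_cmp : comparable_on g (fun i => positive_arbor RN eta i || positive_arbor RN xi i).
  move=> i j /orP + /orP; rewrite /positive_arbor => -[] /and3P [_ ti pi] [] /and3P [_ tj pj];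
  by apply: positive_tree_weights_comparable => //; rewrite ?ti ?pi ?tj ?pj.
have [m [m_gt0 m_cv]] :=
  ratio_of_sums_cv g_gt0 g_cmp (exists_positive_arbor xi (irr 0%N)) c_gt0 W_bd.
by exists m; split => //; apply: (Un_cv_ext _ _ _ _ m_cv) => N; rewrite mu_ratio.
Qed.
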